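(* If $L$ is a flat layout, then $\mathrm{coal}^\flat(L)$ is the unique flat layout of minimal rank whose layout function equals $\Phi_L$.
   Context: A flat layout $L=(s_1,\dots,s_m):(d_1,\dots,d_m)$ consists of a tuple of positive integers and a tuple of nonnegative integers of the same length $m=\mathrm{rank}(L)$; its modes are $s_i:d_i$. Its layout function $\Phi_L:[0,s_1\cdots s_m)\to\mathbb{Z}$ is $\Phi_L(x)=\sum_i x_id_i$ with $x_i=\lfloor x/(s_1\cdots s_{i-1})\rfloor\bmod s_i$. $\mathrm{squeeze}(L)$ removes all modes with $s_i=1$; $\mathrm{coal}^\flat(L)$ is obtained from $\mathrm{squeeze}(L)$ by repeatedly replacing adjacent modes $s_i,s_{i+1}:d_i,d_{i+1}$ with $d_{i+1}=s_id_i$ by the single mode $s_is_{i+1}:d_i$ until no such pair remains. *)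

From mathcomp Require Import all_boot.
Set Implicit Arguments. Unset Strict Implicit. Unset Printing Implicit Defensive.

(* A layout is represented as the sequence of its modes s_i : d_i,
   i.e. a seq of pairs (shape, stride); this enforces equal lengths
   of the shape and stride tuples. *)
Definition layout := seq (nat * nat).

Definition shape (L : layout) : seq nat := map fst L.
Definition stride (L : layout) : seq nat := map snd L.

Definition flat (L : layout) : bool := all (fun m => 0 < m.1) L.

Definition rank (L : layout) : nat := size L.

Definition lsize (L : layout) : nat := \prod_(m <- L) m.1.

Definition layout_fun (L : layout) (x : nat) : nat :=
  \sum_(i < size L)
     ((x %/ \prod_(j < i) nth 0 (shape L) j) %% nth 0 (shape L) i)
       * nth 0 (stride L) i.

Definition same_layout_fun (L L' : layout) : Prop :=
  lsize L = lsize L' /\ forall x, x < lsize L -> layout_fun L x = layout_fun L' x.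

Definition squeeze (L : layout) : layout := filter (fun m => m.1 != 1) L.

(* The result has no adjacent mergeable pair. *)
Fixpoint coal_aux (L : layout) : layout :=
  match L with
  | [::] => [::]
  | m :: r =>
      match coal_aux r with
      | m2 :: r' => if m2.2 == m.1 * m.2 then (m.1 * m2.1, m.2) :: r'
                    else m :: m2 :: r'
      | [::] => [:: m]
      end
  end.

Definition coal_flat (L : layout) : layout := coal_aux (squeeze L).

From mathcomp Require Import all_boot.
Set Implicit Arguments. Unset Strict Implicit. Unset Printing Implicit Defensive.

(* Phi_L is a mixed-radix digit expansion: Phi_{(s,d)::r}(x) = (x mod s) d + Phi_r(x div s).
   Squeezing and merging preserve it and produce a coalesced layout: all shapes exceed 1 and no
   adjacent pair is mergeable.  A coalesced layout is determined by its function: its first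
   stride is Phi(1), its first shape s is the least x > 0 with Phi(x) <> x d (or the domain
   size), and its tail is read off at the multiples of s.  Hence every flat L' with
   Phi_L' = Phi_L has coal_flat L' = coal_flat L, and coal_flat never lengthens a layout and
   shortens every layout it changes. *)

Lemma lsize_nil : lsize [::] = 1.
Proof. by rewrite /lsize big_nil. Qed.

Lemma lsize_cons m r : lsize (m :: r) = m.1 * lsize r.
Proof. by rewrite /lsize big_cons. Qed.

Lemma lsize_gt0 L : flat L -> 0 < lsize L.
Proof.
elim: L => [|m r IHr]; first by rewrite lsize_nil.
by rewrite lsize_cons /= => /andP[m_gt0 /IHr r_gt0]; rewrite muln_gt0 m_gt0.
Qed.

Lemma layout_fun_nil x : layout_fun [::] x = 0.
Proof. by rewrite /layout_fun big_ord0. Qed.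

Lemma layout_fun_cons m r x :
  layout_fun (m :: r) x = x %% m.1 * m.2 + layout_fun r (x %/ m.1).
Proof.
rewrite /layout_fun big_ord_recl big_ord0 divn1; congr (_ + _).
by apply: eq_bigr => i _; rewrite big_ord_recl divnMA.
Qed.

Lemma layout_fun0 L : layout_fun L 0 = 0.
Proof.
by elim: L => [|m r IHr]; rewrite ?layout_fun_nil // layout_fun_cons mod0n div0n IHr.
Qed.

Lemma layout_fun_small s d r x : x < s -> layout_fun ((s, d) :: r) x = x * d.
Proof.
by move=> lt_xs; rewrite layout_fun_cons modn_small // divn_small // layout_fun0 addn0.
Qed.

Lemma layout_fun_mull s d r y :
  0 < s -> layout_fun ((s, d) :: r) (y * s) = layout_fun r y.
Proof. by move=> s_gt0; rewrite layout_fun_cons modnMl mulnK. Qed.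

Lemma same_layout_fun_sym A B : same_layout_fun A B -> same_layout_fun B A.
Proof. by case=> eq_size eq_fun; split=> // x; rewrite -eq_size => /eq_fun. Qed.

Lemma same_layout_fun_trans A B C :
  same_layout_fun A B -> same_layout_fun B C -> same_layout_fun A C.
Proof.
case=> eqAB funAB [eqBC funBC]; split; first by rewrite eqAB.
by move=> x ltxA; rewrite funAB // funBC // -eqAB.
Qed.

Lemma same_layout_funP A B :
  lsize A = lsize B -> layout_fun A =1 layout_fun B -> same_layout_fun A B.
Proof. by move=> eq_size eq_fun; split=> // x _; apply: eq_fun. Qed.

Lemma lsize_squeeze L : lsize (squeeze L) = lsize L.
Proof.
elim: L => //= m r IHr; rewrite lsize_cons -IHr.
by case: eqP => [-> | _]; rewrite ?mul1n ?lsize_cons.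
Qed.

Lemma layout_fun_squeeze L : layout_fun (squeeze L) =1 layout_fun L.
Proof.
elim: L => //= m r IHr x; rewrite layout_fun_cons -IHr.
by case: eqP => [-> | _]; rewrite ?modn1 ?divn1 ?layout_fun_cons.
Qed.

Lemma size_squeeze L : squeeze L = L \/ size (squeeze L) < size L.
Proof.
rewrite /squeeze size_filter ltn_neqAle count_size andbT -all_count.
by case: (boolP (all _ L)) => [/all_filterP | _]; [left | right].
Qed.

Lemma modnM_split x a b : x %% (a * b) = x %% a + a * (x %/ a %% b).
Proof.
rewrite modn_divl (mulnC b a); set y := x %% (a * b).
have -> : x %% a = y %% a by rewrite /y modn_dvdm // dvdn_mulr.
by rewrite {1}(divn_eq y a) addnC mulnC.
Qed.

Lemma lsize_coal_aux L : lsize (coal_aux L) = lsize L.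
Proof.
elim: L => //= m r; rewrite lsize_cons => <-.
case: (coal_aux r) => [|m2 r']; first by rewrite lsize_cons.
by case: ifP; rewrite !lsize_cons //= mulnA.
Qed.

(* Merging (s1,d) with (s2, s1 d) joins two mixed-radix digits into one digit of radix s1 s2. *)
Lemma layout_fun_coal_aux L : layout_fun (coal_aux L) =1 layout_fun L.
Proof.
elim: L => //= m r IHr x; rewrite layout_fun_cons -IHr.
case: (coal_aux r) => [|m2 r']; first by rewrite layout_fun_cons.
case: ifP => [/eqP merge_m | _]; rewrite !layout_fun_cons //=.
rewrite merge_m divnMA modnM_split mulnDl addnA.
by rewrite [m.1 * _]mulnC -mulnA.
Qed.

Lemma size_coal_aux L : coal_aux L = L \/ size (coal_aux L) < size L.
Proof.
elim: L => [|m r]; first by left.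
case=> [coal_r | ] /=.
  by rewrite coal_r; case: r {coal_r} => [|m2 r'] /=; [left | case: ifP; [right | left]].
case: (coal_aux r) => [|m2 r'] lt_r; right=> //=.
by case: ifP => _ /=; rewrite ltnS // ltnW.
Qed.

Lemma size_coal_flat L : coal_flat L = L \/ size (coal_flat L) < size L.
Proof.
rewrite /coal_flat; case: (size_coal_aux (squeeze L)) => [-> | lt_coal].
  exact: size_squeeze.
right; case: (size_squeeze L) => [squeeze_id | lt_squeeze].
  by rewrite -{2}squeeze_id.
exact: ltn_trans lt_squeeze.
Qed.

Lemma same_layout_fun_coal_flat L : same_layout_fun (coal_flat L) L.
Proof.
apply: same_layout_funP => [|x]; rewrite /coal_flat.
  by rewrite lsize_coal_aux lsize_squeeze.
by rewrite layout_fun_coal_aux layout_fun_squeeze.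
Qed.

Definition mergeable (m m2 : nat * nat) : bool := m2.2 == m.1 * m.2.

Definition coalesced (L : layout) : bool :=
  all (fun m => 1 < m.1) L && sorted (fun m m2 => ~~ mergeable m m2) L.

Lemma coalesced_cons m r :
  coalesced (m :: r) =
  [&& 1 < m.1, (if r is m2 :: _ then ~~ mergeable m m2 else true) & coalesced r].
Proof.
rewrite /coalesced /=; case: r => [|m2 r] /=; first by rewrite !andbT.
by rewrite -!andbA; case: (~~ mergeable m m2); rewrite ?andbF.
Qed.

Lemma coalesced_flat L : coalesced L -> flat L.
Proof. by case/andP=> /allP shapes_gt1 _; apply/allP => m /shapes_gt1 /ltnW. Qed.

Lemma coalesced_coal_aux L : all (fun m => 1 < m.1) L -> coalesced (coal_aux L).
Proof.
elim: L => //= m r IHr /andP[m_gt1 /IHr].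
case: (coal_aux r) => [|m2 r']; first by rewrite coalesced_cons m_gt1.
rewrite coalesced_cons => /and3P[m2_gt1 head_r' coal_r'].
case: ifP => [/eqP merge_m | not_merge]; rewrite coalesced_cons /=.
- rewrite coal_r' andbT (leq_trans m2_gt1 (leq_pmull _ (ltnW m_gt1))).
  case: r' head_r' {coal_r'} => // m3 r''.
  by rewrite /mergeable /= merge_m mulnA [m2.1 * _]mulnC.
- by rewrite m_gt1 /mergeable not_merge coalesced_cons m2_gt1 head_r'.
Qed.

Lemma coalesced_coal_flat L : flat L -> coalesced (coal_flat L).
Proof.
move=> /allP flatL; apply: coalesced_coal_aux; apply/allP => m.
by rewrite mem_filter ltn_neqAle eq_sym => /andP[-> /flatL].
Qed.

Lemma coalesced_lsize_gt1 m r : coalesced (m :: r) -> 1 < lsize (m :: r).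
Proof.
rewrite coalesced_cons lsize_cons => /and3P[m_gt1 _ /coalesced_flat/lsize_gt0 r_gt0].
exact: leq_trans m_gt1 (leq_pmulr _ r_gt0).
Qed.

Lemma coalesced_head_shape s d r :
  coalesced ((s, d) :: r) -> s < lsize ((s, d) :: r) ->
  layout_fun ((s, d) :: r) s != s * d.
Proof.
case: r => [|[s2 d2] r]; first by rewrite lsize_cons lsize_nil muln1 ltnn.
rewrite coalesced_cons => /and3P[s_gt1 /= not_merge].
rewrite coalesced_cons => /andP[s2_gt1 _] _.
rewrite -[s in layout_fun _ s]mul1n layout_fun_mull ?layout_fun_small ?mul1n //.
exact: ltnW.
Qed.

Lemma coalesced_head_shape_leq s d r s' r' :
  coalesced ((s, d) :: r) -> flat r' ->
  same_layout_fun ((s, d) :: r) ((s', d) :: r') -> s' <= s.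
Proof.
move=> coalA flat_r' [eq_size eq_fun]; rewrite leqNgt; apply/negP => lt_ss'.
have lt_sA : s < lsize ((s, d) :: r).
  by rewrite eq_size lsize_cons (leq_trans lt_ss') // leq_pmulr // lsize_gt0.
by move: (coalesced_head_shape coalA lt_sA); rewrite eq_fun // layout_fun_small ?eqxx.
Qed.

Lemma same_layout_fun_behead m r r' :
  0 < m.1 -> same_layout_fun (m :: r) (m :: r') -> same_layout_fun r r'.
Proof.
case: m => s d /= s_gt0 [eq_size eq_fun]; split.
  by apply/eqP; move/eqP: eq_size; rewrite !lsize_cons eqn_pmul2l.
move=> y lt_y; rewrite -(layout_fun_mull d r y s_gt0) -(layout_fun_mull d r' y s_gt0).
by apply: eq_fun; rewrite lsize_cons /= [s * _]mulnC ltn_pmul2r.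
Qed.

Lemma coalesced_unique A B :
  coalesced A -> coalesced B -> same_layout_fun A B -> A = B.
Proof.
elim: A B => [|[s d] r IHr] [|[s' d'] r'] //.
- by move=> _ /coalesced_lsize_gt1 + [eq_size _]; rewrite -eq_size lsize_nil.
- by move=> /coalesced_lsize_gt1 + _ [eq_size _]; rewrite eq_size lsize_nil.
move=> coalA coalB sameAB; have [eq_size eq_fun] := sameAB.
move: (coalA) (coalB); rewrite !coalesced_cons.
move=> /and3P[s_gt1 _ coal_r] /and3P[s'_gt1 _ coal_r'].
have eq_d : d = d'.
  have := eq_fun 1 (coalesced_lsize_gt1 coalA).
  by rewrite !layout_fun_small // !mul1n.
subst d'.
have eq_s : s = s'.
  apply/anti_leq/andP; split.
    exact: coalesced_head_shape_leq coalB (coalesced_flat coal_r) (same_layout_fun_sym sameAB).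
  exact: coalesced_head_shape_leq coalA (coalesced_flat coal_r') sameAB.
subst s'; congr (_ :: _); apply: IHr => //.
exact: same_layout_fun_behead (ltnW s_gt1) sameAB.
Qed.

Lemma coal_flat_unique L L' :
  flat L -> flat L' -> same_layout_fun L' L -> coal_flat L' = coal_flat L.
Proof.
move=> flatL flatL' sameL'L; apply: coalesced_unique; try exact: coalesced_coal_flat.
apply: same_layout_fun_trans (same_layout_fun_coal_flat L') _.
exact: same_layout_fun_trans sameL'L (same_layout_fun_sym (same_layout_fun_coal_flat L)).
Qed.

Theorem mainTheorem11 (L : layout) :
  flat L ->
  [/\ flat (coal_flat L),
      same_layout_fun (coal_flat L) L,
      (forall L' : layout, flat L' -> same_layout_fun L' L ->
         rank (coal_flat L) <= rank L') &
      (forall L' : layout, flat L' -> same_layout_fun L' L ->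
         rank L' = rank (coal_flat L) -> L' = coal_flat L)].
Proof.
move=> flatL; split.
- exact: coalesced_flat (coalesced_coal_flat flatL).
- exact: same_layout_fun_coal_flat.
- move=> L' flatL' sameL'L; rewrite /rank -(coal_flat_unique flatL flatL' sameL'L).
  by case: (size_coal_flat L') => [-> | /ltnW].
- move=> L' flatL' sameL'L; rewrite /rank -(coal_flat_unique flatL flatL' sameL'L).
  by case: (size_coal_flat L') => [-> // | + eq_size]; rewrite eq_size ltnn.
Qed.
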